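(* Let $X$ be a finite simplicial complex with vertices labelled by $\{1,\dots,n\}$, let $d\ge0$, and let $\sigma$ be a symmetry of $X$. Suppose $F^{\uparrow}:C_{d+1}(X)\to C_{d+1}(X)$ is componentwise with every component given by the same odd function $\mathbb{R}\to\mathbb{R}$, and $F^{\downarrow}:C_{d-1}(X)\to C_{d-1}(X)$ is componentwise with every component given by the same odd function $\mathbb{R}\to\mathbb{R}$. Let $G^{\uparrow}=B_{d+1}F^{\uparrow}B_{d+1}^\intercal$ and $G^{\downarrow}=B_d^\intercal F^{\downarrow}B_d$, as maps $C_d(X)\to C_d(X)$. Then $$G^{\uparrow}\circ S^d_\sigma=S^d_\sigma\circ G^{\uparrow}\quad\text{and}\quad G^{\downarrow}\circ S^d_\sigma=S^d_\sigma\circ G^{\downarrow}.$$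
   Context: A finite simplicial complex $X$ on vertex set $\{1,\dots,n\}$ is a collection of nonempty subsets closed under taking nonempty subsets; $X_d$ is the set of simplices with $d+1$ vertices; a $d$-simplex with vertices $i_0<\dots<i_d$ is written $[i_0,\dots,i_d]$ and $A_s=\{i_0,\dots,i_d\}$. $C_d(X)$ is the real vector space with basis $X_d$ and inner product making $X_d$ orthonormal ($C_{-1}(X)=0$, $B_0=0$). The boundary map is $\partial_d[i_0,\dots,i_d]=\sum_{k=0}^d(-1)^k[i_0,\dots,\widehat{i_k},\dots,i_d]$ with matrix $B_d$ in the bases $X_d,X_{d-1}$. A symmetry of $X$ is a permutation $\sigma$ of $\{1,\dots,n\}$ such that for every simplex $s$ the set $\sigma(A_s)$ is again a simplex, denoted $\sigma(s)$. For $A=\{i_0<\dots<i_d\}$, $\operatorname{sgn}(A,\sigma)=\operatorname{sgn}(\tau)$ where $\tau$ is the unique permutation of $\{0,\dots,d\}$ with $\sigma(i_{\tau(0)})<\dots<\sigma(i_{\tau(d)})$. $S^d_\sigma:C_d(X)\to C_d(X)$ is the linear map with $S^d_\sigma(s)=\operatorname{sgn}(A_s,\sigma)\,\sigma(s)$ for $s\in X_d$. A map $F:C_D(X)\to C_D(X)$ is componentwise if $(F(x))_s$ depends only on $x_s$, i.e. $(F(x))_s=F_s(x_s)$. *)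

From HB Require Import structures.
From mathcomp Require Import all_boot all_order all_algebra all_fingroup.
From mathcomp Require Import reals.
Set Implicit Arguments. Unset Strict Implicit. Unset Printing Implicit Defensive.
Import Order.TTheory GRing.Theory Num.Theory.
Local Open Scope ring_scope.

(* Vertices are 'I_n = {0,...,n-1} (order-preserving relabelling of {1,...,n}).
   A simplex is a (nonempty) finite set of vertices; a complex is a set of simplices. *)
Definition simplicial_complex (n : nat) (X : {set {set 'I_n}}) : Prop :=
  (forall s, s \in X -> s != set0) /\
  (forall s t : {set 'I_n}, s \in X -> t \subset s -> t != set0 -> t \in X).

(* Simplices with exactly k vertices: X_d = simplices X d.+1. *)
Definition simplices (n : nat) (X : {set {set 'I_n}}) (k : nat) : {set {set 'I_n}} :=
  [set s in X | #|s| == k].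

(* Chains: real coefficients indexed by vertex sets; the chain space C_d(X)
   consists of those supported on X_d. *)
Definition chain (R : realType) (n : nat) := {ffun {set 'I_n} -> R}.

Definition in_chains (R : realType) n (X : {set {set 'I_n}}) (k : nat) (x : chain R n) : Prop :=
  forall s, s \notin simplices X k -> x s = 0.

(* Coefficient of face t in the boundary of simplex s = [i_0 < ... < i_d]:
   removing v = i_j contributes (-1)^j, j = #{u in s | u < v}. *)
Definition incidence (R : realType) n (t s : {set 'I_n}) : R :=
  \sum_(v in s) (t == s :\ v)%:R * (-1) ^+ #|[set u in s | (u < v)%N]|.

(* Matrix entry B(t, s) of the boundary map from simplices with k vertices
   to simplices with k-1 vertices (for k = 1 the target is empty: B_0 = 0). *)
Definition bmat (R : realType) n (X : {set {set 'I_n}}) (k : nat) (t s : {set 'I_n}) : R :=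
  if (s \in simplices X k) && (t \in simplices X k.-1) then incidence R t s else 0.

Definition bnd (R : realType) n (X : {set {set 'I_n}}) (k : nat) (y : chain R n) : chain R n :=
  [ffun t => \sum_s bmat R X k t s * y s].
Definition bndT (R : realType) n (X : {set {set 'I_n}}) (k : nat) (x : chain R n) : chain R n :=
  [ffun s => \sum_t bmat R X k t s * x t].

Definition compw (R : realType) n (f : R -> R) (x : chain R n) : chain R n :=
  [ffun s => f (x s)].

Definition odd_fun (R : realType) (f : R -> R) : Prop := forall r, f (- r) = - f r.

Definition symmetry n (X : {set {set 'I_n}}) (sigma : {perm 'I_n}) : Prop :=
  forall s, s \in X -> sigma @: s \in X.

(* sgn(A, sigma) = sign of the permutation tau sorting sigma(A); computed as
   (-1)^(number of inversions of tau) = (-1)^#{(i,j) in A^2 | i < j, sigma i > sigma j}. *)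
Definition sgnA (R : realType) n (A : {set 'I_n}) (sigma : {perm 'I_n}) : R :=
  (-1) ^+ #|[set p : 'I_n * 'I_n | [&& p.1 \in A, p.2 \in A, (p.1 < p.2)%N & (sigma p.2 < sigma p.1)%N]]|.

(* S^d_sigma : s |-> sgn(A_s, sigma) sigma(s), for s in X_d (k = d+1 vertices). *)
Definition Ssig (R : realType) n (X : {set {set 'I_n}}) (k : nat) (sigma : {perm 'I_n})
  (x : chain R n) : chain R n :=
  [ffun t => \sum_(s in simplices X k) (sigma @: s == t)%:R * sgnA R s sigma * x s].

(* G_up = B_{d+1} F_up B_{d+1}^T,  G_down = B_d^T F_down B_d, on C_d. *)
Definition Gup (R : realType) n (X : {set {set 'I_n}}) (d : nat) (f : R -> R) (x : chain R n) :=
  bnd X d.+2 (compw f (bndT X d.+2 x)).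
Definition Gdown (R : realType) n (X : {set {set 'I_n}}) (d : nat) (g : R -> R) (x : chain R n) :=
  bndT X d.+1 (compw g (bnd X d.+1 x)).

(* The
   boundary matrix is S-equivariant, B(sigma t, sigma s) = sgn(t) sgn(s) B(t, s):
   deleting the vertex v from s shifts its position in the boundary formula from
   #{u in s | u < v} to #{u in s | sigma u < sigma v}, and the parity of this
   shift is exactly the number of inversions of sigma involving v, i.e. the
   change from sgn(s) to sgn(s \ v).  Hence S commutes with B and B^T in the
   sense B S = S B, B^T S = S B^T, and an odd componentwise map F commutes
   with S because F(+-x) = +-F(x) and F(0) = 0.  Composing gives the claim. *)

From mathcomp Require Import all_boot all_order all_algebra all_fingroup.
From mathcomp Require Import reals.
Set Implicit Arguments. Unset Strict Implicit. Unset Printing Implicit Defensive.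
Import Order.TTheory GRing.Theory Num.Theory.
Local Open Scope ring_scope.

Lemma imset_can (aT rT : finType) (f : aT -> rT) (g : rT -> aT) :
  cancel f g -> cancel (fun A : {set aT} => f @: A) (fun B : {set rT} => g @: B).
Proof. by move=> fK A; rewrite -imset_comp (eq_imset _ fK) imset_id. Qed.

Lemma signr_cardsD (R : pzRingType) (T : finType) (A B : {set T}) :
  (-1) ^+ (#|A :\: B| + #|B :\: A|) = (-1) ^+ (#|A| + #|B|) :> R.
Proof.
rewrite -(cardsID B A) -(cardsID A B) setIC addnACA addnn -mul2n mulnC [RHS]exprD exprM.
by rewrite sqrr_sign mul1r.
Qed.

Lemma odd_fun0 (R : realType) (f : R -> R) : odd_fun f -> f 0 = 0.
Proof. by move=> fN; apply/eqP; rewrite -eqNr -fN oppr0. Qed.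

Lemma odd_fun_sign (R : realType) (f : R -> R) (m : nat) (r : R) :
  odd_fun f -> f ((-1) ^+ m * r) = (-1) ^+ m * f r.
Proof. by move=> fN; rewrite -signr_odd !mulr_sign; case: odd. Qed.

Section Inversions.
Variables (n : nat) (sigma : {perm 'I_n}).

Definition inversions (A : {set 'I_n}) : {set 'I_n * 'I_n} :=
  [set p | [&& p.1 \in A, p.2 \in A, (p.1 < p.2)%N & (sigma p.2 < sigma p.1)%N]].

Lemma sgnAE (R : realType) (A : {set 'I_n}) :
  sgnA R A sigma = (-1) ^+ #|inversions A|.
Proof. by []. Qed.

Lemma card_inversions_setD1 (A : {set 'I_n}) (v : 'I_n) : v \in A ->
  #|inversions A| = (#|[set u in A | (u < v)%N & (sigma v < sigma u)%N]|
    + #|[set u in A | (v < u)%N & (sigma u < sigma v)%N]| + #|inversions (A :\ v)|)%N.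
Proof.
move=> vA; set P := inversions A.
pose into_v := [set p : 'I_n * 'I_n | p.2 == v].
pose from_v := [set p : 'I_n * 'I_n | p.1 == v].
have P_into_v : P :&: into_v =
    (fun u => (u, v)) @: [set u in A | (u < v)%N & (sigma v < sigma u)%N].
  apply/setP => -[a b]; apply/idP/imsetP => /=.
    rewrite !inE /= => /andP[/and4P[aA _ ab ba] /eqP bv]; subst b.
    by exists a; rewrite // !inE aA ab.
  by case=> u; rewrite !inE => /and3P[uA uv vu] [-> ->]; rewrite uA vA uv vu eqxx.
have P_from_v : (P :\: into_v) :&: from_v =
    (fun u => (v, u)) @: [set u in A | (v < u)%N & (sigma u < sigma v)%N].
  apply/setP => -[a b]; apply/idP/imsetP => /=.
    rewrite !inE /= => /andP[/andP[_ /and4P[_ bA ab ba]] /eqP av]; subst a.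
    by exists b; rewrite // !inE bA ab.
  case=> u; rewrite !inE => /and3P[uA vu uv] [-> ->].
  by rewrite uA vA vu uv eqxx -val_eqE /= gtn_eqF.
have P_rest : (P :\: into_v) :\: from_v = inversions (A :\ v).
  by apply/setP => -[a b]; rewrite !inE /=; case: (a == v); case: (b == v); rewrite ?andbF.
rewrite -(cardsID into_v P) -(cardsID from_v (P :\: into_v)) P_into_v P_from_v P_rest.
by rewrite addnA !card_imset // => u w [].
Qed.

Lemma sgnA_setD1 (R : realType) (A : {set 'I_n}) (v : 'I_n) : v \in A ->
  sgnA R (A :\ v) sigma * (-1) ^+ #|[set u in A | (u < v)%N]| =
  (-1) ^+ #|[set u in A | (sigma u < sigma v)%N]| * sgnA R A sigma.
Proof.
move=> vA; set L := [set u in A | _]; set S := [set u in A | _].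
have ltn_flip (a b : 'I_n) : a != b -> (b < a)%N = ~~ (a < b)%N.
  by move=> ab; rewrite -leqNgt [RHS]leq_eqVlt val_eqE eq_sym (negbTE ab).
have LS : [set u in A | (u < v)%N & (sigma v < sigma u)%N] = L :\: S.
  apply/setP => u; rewrite !inE; have [->|uv] := eqVneq u v; first by rewrite !ltnn !andbF.
  rewrite (ltn_flip (sigma u)) ?(inj_eq perm_inj) //.
  by case: (u \in A); rewrite /= ?andbF // andbC.
have SL : [set u in A | (v < u)%N & (sigma u < sigma v)%N] = S :\: L.
  apply/setP => u; rewrite !inE; have [->|uv] := eqVneq u v; first by rewrite !ltnn !andbF.
  by rewrite (ltn_flip u) //; case: (u \in A); rewrite /= ?andbF // andbC.
rewrite !sgnAE (card_inversions_setD1 vA) LS SL exprD signr_cardsD exprD.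
by rewrite [_ * (-1) ^+ #|S|]mulrC -!mulrA signrMK mulrC.
Qed.

End Inversions.

Section PermutedSimplices.
Variables (R : realType) (n : nat) (sigma : {perm 'I_n}).
Implicit Types (s t : {set 'I_n}) (x y : chain R n).

Lemma imset_permKV : cancel (fun s => sigma^-1%g @: s) (fun s => sigma @: s).
Proof. exact/imset_can/permKV. Qed.

Lemma chain_eq_imset (u w : chain R n) :
  (forall s, u (sigma @: s) = w (sigma @: s)) -> u = w.
Proof. by move=> uw; apply/ffunP => t; rewrite -(imset_permKV t). Qed.

Lemma imset_perm_inj : injective (fun s => sigma @: s).
Proof. exact/imset_inj/perm_inj. Qed.

Lemma sgnAK s : involutive ( *%R (sgnA R s sigma)).
Proof. exact: signrMK. Qed.

Lemma imset_perm_setD1 s v : sigma @: (s :\ v) = sigma @: s :\ sigma v.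
Proof.
apply/setP => u; rewrite -[u](permKV sigma) !inE (inj_eq perm_inj).
by rewrite !mem_imset ?inE //; apply: perm_inj.
Qed.

Lemma incidence_imset_perm t s :
  incidence R (sigma @: t) (sigma @: s) * sgnA R s sigma =
  sgnA R t sigma * incidence R t s.
Proof.
rewrite /incidence big_imset /=; last by move=> u w _ _; apply: perm_inj.
rewrite mulr_suml mulr_sumr; apply: eq_bigr => v vs.
rewrite -imset_perm_setD1 (inj_eq imset_perm_inj).
have [->|_] := eqVneq t (s :\ v); last by rewrite !mul0r mulr0.
have -> : [set u in sigma @: s | (u < sigma v)%N] =
          sigma @: [set u in s | (sigma u < sigma v)%N].
  apply/setP => u; rewrite -[u](permKV sigma) inE.
  by rewrite !mem_imset ?inE //; apply: perm_inj.
by rewrite !mul1r card_imset ?(sgnA_setD1 sigma R vs) //; apply: perm_inj.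
Qed.

Section Symmetry.
Variables (X : {set {set 'I_n}}) (sym : symmetry X sigma).

Lemma mem_imset_symmetry s : (sigma @: s \in X) = (s \in X).
Proof.
(* [symmetry] only gives one direction; the image of X under the injective map
   [sigma @: _] is a subset of X of the same size, hence all of X. *)
apply/idP/idP; last exact: sym.
have sub : (fun s' => sigma @: s') @: X \subset X.
  by apply/subsetP => _ /imsetP[s' s'X ->]; exact: sym.
have eqX : (fun s' => sigma @: s') @: X = X.
  by apply/eqP; rewrite eqEcard sub card_imset ?leqnn // => a b /imset_perm_inj.
by rewrite -{1}eqX (mem_imset _ _ imset_perm_inj).
Qed.

Lemma mem_simplices_imset k s : (sigma @: s \in simplices X k) = (s \in simplices X k).
Proof. by rewrite !inE mem_imset_symmetry card_imset //; apply: perm_inj. Qed.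

Lemma Ssig_imset k x s :
  Ssig X k sigma x (sigma @: s) = (s \in simplices X k)%:R * sgnA R s sigma * x s.
Proof.
rewrite ffunE; under eq_bigr => s' _ do rewrite (inj_eq imset_perm_inj).
case: (boolP (s \in simplices X k)) => sX; last first.
  rewrite big1 ?mul0r // => s' s'X.
  have /negbTE -> : s' != s by apply: contraNneq sX => <-.
  by rewrite !mul0r.
rewrite (bigD1 s) //= eqxx big1 ?addr0 // => s' /andP[_ /negbTE ->].
by rewrite !mul0r.
Qed.

Lemma bmat_imset_perm k t s :
  bmat R X k (sigma @: t) (sigma @: s) =
  sgnA R t sigma * sgnA R s sigma * bmat R X k t s.
Proof.
rewrite /bmat !mem_simplices_imset; case: ifP => _; last by rewrite mulr0.
by rewrite mulrAC -incidence_imset_perm -mulrA -expr2 sqrr_sign mulr1.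
Qed.

Lemma bnd_Ssig k y : bnd X k (Ssig X k sigma y) = Ssig X k.-1 sigma (bnd X k y).
Proof.
apply: chain_eq_imset => t; rewrite Ssig_imset !ffunE.
rewrite (reindex_inj imset_perm_inj) mulr_sumr.
apply: eq_bigr => s _; rewrite Ssig_imset bmat_imset_perm /bmat.
case: (s \in _); case: (t \in _); rewrite /= ?(mul0r, mulr0, mul1r) //.
by rewrite -!mulrA [incidence _ _ _ * _]mulrCA sgnAK.
Qed.

Lemma bndT_Ssig k x : bndT X k (Ssig X k.-1 sigma x) = Ssig X k sigma (bndT X k x).
Proof.
apply: chain_eq_imset => s; rewrite Ssig_imset !ffunE.
rewrite (reindex_inj imset_perm_inj) mulr_sumr.
apply: eq_bigr => t _; rewrite Ssig_imset bmat_imset_perm /bmat.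
case: (s \in _); case: (t \in _); rewrite /= ?(mul0r, mulr0, mul1r) //.
by rewrite [sgnA R t _ * _]mulrC -!mulrA [incidence _ _ _ * _]mulrCA sgnAK.
Qed.

Lemma compw_Ssig (f : R -> R) k x : odd_fun f ->
  compw f (Ssig X k sigma x) = Ssig X k sigma (compw f x).
Proof.
move=> fN; apply: chain_eq_imset => s; rewrite ffunE !Ssig_imset ffunE.
by case: (_ \in _); rewrite /= ?(mul1r, mul0r); [apply: odd_fun_sign | apply: odd_fun0].
Qed.

End Symmetry.
End PermutedSimplices.

Theorem mainTheorem3 (R : realType) (n : nat) (X : {set {set 'I_n}})
  (HX : simplicial_complex X) (d : nat) (sigma : {perm 'I_n})
  (Hsigma : symmetry X sigma) (f g : R -> R)
  (Hf : odd_fun f) (Hg : odd_fun g) :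
  (forall x : chain R n, in_chains X d.+1 x ->
     Gup X d f (Ssig X d.+1 sigma x) = Ssig X d.+1 sigma (Gup X d f x)) /\
  (forall x : chain R n, in_chains X d.+1 x ->
     Gdown X d g (Ssig X d.+1 sigma x) = Ssig X d.+1 sigma (Gdown X d g x)).
Proof.
split=> x _.
  by rewrite /Gup bndT_Ssig // compw_Ssig // bnd_Ssig.
by rewrite /Gdown bnd_Ssig // compw_Ssig // bndT_Ssig.
Qed.
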